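(* Let $m$ be an integer. (i) If $m=N_1(1+(x-1)^3h(x))$ for some $h\in\mathbb Z[x]$ with $5\nmid h(1)$, then there is $F\in\mathbb Z[x]$ with $M_{25}(F)=5^3m$, $F(1)=N_2(F)=5$ and $N_1(F)=5m$. (ii) If $m=N_2(1+(x-1)^3h(x))$ for some $h\in\mathbb Z[x]$ with $5\nmid h(1)$, then there is $F\in\mathbb Z[x]$ with $M_{25}(F)=5^3m$, $F(1)=N_1(F)=5$ and $N_2(F)=5m$.
   Context: $M_{25}(F)=\prod_{z^{25}=1}F(z)$. For $k\geq1$, $\omega_k=e^{2\pi i/5^k}$ and $N_k(F)=\prod_{1\leq j\leq 5^k,\ 5\nmid j}F(\omega_k^j)$. *)

From mathcomp Require Import all_boot all_order all_algebra all_field.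
Set Implicit Arguments. Unset Strict Implicit. Unset Printing Implicit Defensive.
Import Order.TTheory GRing.Theory Num.Theory.
Local Open Scope ring_scope.

Definition evC (F : {poly int}) (z : algC) : algC :=
  (map_poly (fun a : int => a%:~R) F).[z].

Lemma five_pow_gt0 (k : nat) : (0 < 5 ^ k)%N.
Proof. by rewrite expn_gt0. Qed.

(* A fixed primitive 5^k-th root of unity in algC (stands for e^{2 pi i/5^k};
   the products below do not depend on which primitive root is chosen). *)
Definition omega (k : nat) : algC := sval (C_prim_root_exists (five_pow_gt0 k)).

(* M_25(F) = prod_{z^25 = 1} F(z) : the 25th roots of unity are omega 2 ^+ j, j < 25. *)
Definition M25 (F : {poly int}) : algC := \prod_(j < 25) evC F (omega 2 ^+ j).

Definition Nk (k : nat) (F : {poly int}) : algC :=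
  \prod_(j < 5 ^ k | ~~ (5 %| j)%N) evC F (omega k ^+ j).

From mathcomp Require Import all_boot all_order all_algebra all_field.
From mathcomp Require Import ring zify.
Import Order.TTheory GRing.Theory Num.Theory.

(* Let G = 1 + (X-1)^3 h, let a be prime to 5 and W = (1 + X + ... + X^(a-1))^3 h(X^a),
   so that G(X^a) = 1 + (X-1)^3 W.  The identity (1-X)^4 = Phi_5 B5 + Phi_25 B25 shows
   that F = (1-X) + Phi_25 (c Phi_5 - B25 W) is 1-y at the primitive 25th roots y and
   (1-y) G(y^a) at the primitive 5th roots.  As y |-> y^a permutes the primitive roots,
   N_2(F) = Phi_25(1) = 5 and N_1(F) = Phi_5(1) N_1(G) = 5m, while F(1) = 5 (5c + a^3 h(1))
   becomes 5 once a^3 h(1) = 1 mod 5 and c is chosen accordingly.  Since the 25th roots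
   of unity are 1 and the primitive 5th and 25th roots, M_25(F) = F(1) N_1(F) N_2(F).
   Part (ii) is the same construction with the roles of Phi_5 and Phi_25 exchanged. *)

Set Implicit Arguments.
Unset Strict Implicit.
Unset Printing Implicit Defensive.
Local Open Scope ring_scope.

Lemma cyclotomic_prime_pow (p k : nat) : prime p ->
  'Phi_(p ^ k.+1) = \sum_(i < p) 'X^(i * p ^ k) :> {poly int}.
Proof.
move=> p_pr; have p_gt0 := prime_gt0 p_pr.
have pk_gt0 j : (0 < p ^ j)%N by rewrite expn_gt0 p_gt0.
have divisorsS : perm_eq (divisors (p ^ k.+1)) ((p ^ k.+1)%N :: divisors (p ^ k)).
  apply: uniq_perm; rewrite /= ?divisors_uniq ?andbT //.
    by rewrite -dvdn_divisors // dvdn_Pexp2l ?prime_gt1 // ltnn.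
  move=> d; rewrite inE -!dvdn_divisors //.
  apply/dvdn_pfactor/idP => // [[j]|].
    rewrite leq_eqVlt => /predU1P[-> ->|j_le_k ->]; first by rewrite eqxx.
    by rewrite dvdn_exp2l ?orbT.
  case/predU1P=> [->|/(dvdn_pfactor _ _ p_pr)[j j_le_k ->]]; first by exists k.+1.
  by exists j => //; apply: leqW.
have Xpk1_nz : 'X^(p ^ k) - 1 != 0 :> {poly int} by rewrite monic_neq0 ?monicXnsubC.
apply: (mulIf Xpk1_nz).
have := prod_Cyclotomic (pk_gt0 k.+1).
rewrite (perm_big _ divisorsS) big_cons prod_Cyclotomic // => ->.
rewrite expnS mulnC exprM subrX1 mulrC; congr (_ * _).
by apply: eq_bigr => i _; rewrite -exprM mulnC.
Qed.

Lemma cyclotomic_prime_pow_horner1 (p k : nat) : prime p -> ('Phi_(p ^ k.+1)).[1] = p%:R :> int.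
Proof.
move=> p_pr; rewrite cyclotomic_prime_pow // horner_sum.
under eq_bigr do rewrite hornerXn expr1n.
by rewrite sumr_const card_ord.
Qed.

Lemma cyclotomic_5pow_horner1 (k : nat) : (0 < k)%N -> ('Phi_(5 ^ k)).[1] = 5 :> int.
Proof. by case: k => // k _; rewrite cyclotomic_prime_pow_horner1. Qed.

Section PrimitiveRootProduct.

Variables (n : nat) (z : algC).
Hypothesis prim_z : n.-primitive_root z.

Definition prim_prod (g : algC -> algC) : algC := \prod_(j < n | coprime j n) g (z ^+ j).

Lemma eq_prim_prod (f g : algC -> algC) :
  (forall y, n.-primitive_root y -> f y = g y) -> prim_prod f = prim_prod g.
Proof. by move=> eq_fg; apply: eq_bigr => j co_j; rewrite eq_fg ?prim_root_exp_coprime. Qed.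

Lemma prim_prod_exp (e : nat) (g : algC -> algC) : coprime e n ->
  prim_prod (fun y => g (y ^+ e)) = prim_prod g.
Proof.
move=> co_e_n; have n_gt0 := prim_order_gt0 prim_z.
pose mul_by d (j : 'I_n) := Ordinal (ltn_pmod (j * d) n_gt0).
have inj_mul_e : injective (mul_by e).
  (* [(egcdn e n).1] is an inverse of [e] modulo [n]. *)
  apply: can_inj (mul_by (egcdn e n).1) _ => j; apply: val_inj => /=.
  rewrite modnMml -mulnA -modnMmr -{1}(mul1n e).
  by rewrite (chinese_modr co_e_n 0) modnMmr muln1 modn_small.
rewrite /prim_prod [RHS](reindex_inj inj_mul_e); apply: eq_big => j /=.
  by rewrite coprime_modl coprimeMl co_e_n andbT.
by rewrite prim_expr_mod // exprM.
Qed.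

Lemma prim_prod_1subr : prim_prod (fun y => 1 - y) = ('Phi_n).[1]%:~R.
Proof.
rewrite -[1 in RHS](rmorph1 (intr : int -> algC)) -horner_map.
rewrite (Cintr_Cyclotomic prim_z) horner_prod.
by apply: eq_bigr => j _; rewrite hornerXsubC.
Qed.

End PrimitiveRootProduct.

Lemma prim_prod_root_indep (n : nat) (z z' : algC) (g : algC -> algC) :
  n.-primitive_root z -> n.-primitive_root z' -> prim_prod n z g = prim_prod n z' g.
Proof.
move=> prim_z prim_z'; have [e z'E] := prim_rootP prim_z (prim_expr_order prim_z').
have co_e_n : coprime e n by rewrite -(prim_root_exp_coprime e prim_z) -z'E.
rewrite -(prim_prod_exp prim_z g co_e_n); apply: eq_bigr => j _.
by rewrite z'E exprAC.
Qed.

Lemma prod_ord_mul_split (R : comRingType) (p n : nat) (f : nat -> R) : (0 < p)%N ->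
  \prod_(j < p * n) f j = \prod_(i < n) f (p * i)%N * \prod_(j < p * n | ~~ (p %| j)%N) f j.
Proof.
move=> p_gt0; rewrite (bigID (fun j : 'I_(p * n) => p %| j)%N) /=; congr (_ * _).
rewrite -(big_mkord (fun j => p %| j)%N) -(big_mkord xpredT (fun i => f (p * i)%N)).
rewrite mulnC big_mkcond big_nat_mul; apply: eq_big_nat => i _.
rewrite big_ltn ?ltn_pmul2r // dvdn_mull // [in RHS]mulnC big1_seq ?Monoid.mulm1 // => j.
rewrite mem_index_iota => /andP[lt_ij lt_j]; rewrite ifN //.
by apply/dvdnP=> -[q jE]; rewrite jE !ltn_pmul2r // in lt_ij lt_j; lia.
Qed.

Section Evaluation.

Variables (F G : {poly int}) (y : algC).

Lemma evCD : evC (F + G) y = evC F y + evC G y.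
Proof. by rewrite /evC rmorphD hornerD. Qed.

Lemma evCM : evC (F * G) y = evC F y * evC G y.
Proof. by rewrite /evC rmorphM hornerM. Qed.

Lemma evC_1subX : evC (1 - 'X) y = 1 - y.
Proof. by rewrite /evC rmorphB rmorph1 /= map_polyX !hornerE. Qed.

Lemma evC_comp_Xn (a : nat) : evC (F \Po 'X^a) y = evC F (y ^+ a).
Proof. by rewrite /evC map_comp_poly map_polyXn horner_comp hornerXn. Qed.

Lemma evC_at1 : evC F 1 = F.[1]%:~R.
Proof. by rewrite /evC -[1 in LHS](rmorph1 (intr : int -> algC)) horner_map. Qed.

End Evaluation.

Lemma evC_cyclotomic (n : nat) (y : algC) : n.-primitive_root y -> evC 'Phi_n y = 0.
Proof. by move=> prim_y; apply/rootP; rewrite (Cintr_Cyclotomic prim_y) root_cyclotomic. Qed.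

Lemma omega_prim (k : nat) : (5 ^ k).-primitive_root (omega k).
Proof. exact: svalP (C_prim_root_exists (five_pow_gt0 k)). Qed.

Lemma NkM (k : nat) (F G : {poly int}) : Nk k (F * G) = Nk k F * Nk k G.
Proof. by rewrite /Nk -big_split; apply: eq_bigr => j _; rewrite evCM. Qed.

Section NormProducts.

Variable k : nat.
Hypothesis k_gt0 : (0 < k)%N.

Lemma Nk_prim_prod (F : {poly int}) : Nk k F = prim_prod (5 ^ k) (omega k) (evC F).
Proof. by apply: eq_bigl => j; rewrite coprime_pexpr // coprime_sym prime_coprime. Qed.

Lemma Nk_addr_cyclotomicM (Q R : {poly int}) : Nk k (Q + 'Phi_(5 ^ k) * R) = Nk k Q.
Proof.
rewrite !Nk_prim_prod; apply: (eq_prim_prod (omega_prim k)) => y prim_y.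
by rewrite evCD evCM evC_cyclotomic // mul0r addr0.
Qed.

Lemma Nk_comp_Xn (F : {poly int}) (a : nat) : coprime a 5 -> Nk k (F \Po 'X^a) = Nk k F.
Proof.
move=> co_a5; have co_a : coprime a (5 ^ k) by rewrite coprime_pexpr.
rewrite !Nk_prim_prod -(prim_prod_exp (omega_prim k) (evC F) co_a).
by apply: eq_bigr => j _; rewrite evC_comp_Xn.
Qed.

Lemma Nk_1subX : Nk k (1 - 'X) = 5.
Proof.
transitivity (prim_prod (5 ^ k) (omega k) (fun y => 1 - y)).
  by rewrite Nk_prim_prod; apply: eq_bigr => j _; rewrite evC_1subX.
by rewrite prim_prod_1subr ?omega_prim // cyclotomic_5pow_horner1.
Qed.

End NormProducts.

Lemma M25_Nk (F : {poly int}) : M25 F = F.[1]%:~R * Nk 1 F * Nk 2 F.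
Proof.
rewrite /M25 (@prod_ord_mul_split _ 5 5 (fun j => evC F (omega 2 ^+ j))) //; congr (_ * _).
rewrite (bigD1 ord0) //= muln0 expr0 evC_at1 Nk_prim_prod //; congr (_ * _).
have prim_omega2_5 : 5.-primitive_root (omega 2 ^+ 5) by apply: (exp_prim_root (omega_prim 2) 5).
rewrite -(prim_prod_root_indep _ prim_omega2_5 (omega_prim 1)).
apply: eq_big => [[[|[|[|[|[|]]]]] ?]|i _] //=.
by rewrite exprM.
Qed.

Definition bezout_Phi5 : {poly int} :=
  1 - 'X *+ 4 + 'X^2 *+ 8 - 'X^3 *+ 8 + 'X^4 *+ 4 - 'X^6 *+ 3 + 'X^7 *+ 6
  - 'X^8 *+ 6 + 'X^9 *+ 3 - 'X^11 *+ 2 + 'X^12 *+ 4 - 'X^13 *+ 4 + 'X^14 *+ 2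
  - 'X^16 + 'X^17 *+ 2 - 'X^18 *+ 2 + 'X^19.

Definition bezout_Phi25 : {poly int} := - 'X + 'X^2 - 'X^3.

Lemma cyclotomic_bezout :
  (1 - 'X) ^+ 4 = 'Phi_(5 ^ 1) * bezout_Phi5 + 'Phi_(5 ^ 2) * bezout_Phi25.
Proof.
rewrite !cyclotomic_prime_pow // !big_ord_recr !big_ord0 /= /bezout_Phi5 /bezout_Phi25.
ring.
Qed.

Lemma exists_cube_inverse_mod5 (x : int) : ~~ (5 %| x)%Z ->
  exists2 a : nat, coprime a 5 & (5 %| a%:Z ^+ 3 * x - 1)%Z.
Proof.
move=> x_ndvd5; have [r rE] : {r : nat | r%:Z = (x %% 5)%Z}.
  by exists (absz (x %% 5)%Z); rewrite gez0_abs // modz_ge0.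
have r_lt5 : (r < 5)%N by rewrite -ltz_nat rE ltz_pmod.
have r_gt0 : (0 < r)%N.
  by rewrite lt0n; apply: contra x_ndvd5 => /eqP r0; apply/dvdz_mod0P; rewrite -rE r0.
exists r; first by clear rE; move: r_gt0 r_lt5; case: r => [|[|[|[|[|]]]]].
rewrite (divz_eq x 5) -rE; clear rE.
have -> : r%:Z ^+ 3 * ((x %/ 5)%Z * 5 + r%:Z) - 1 = r%:Z ^+ 3 * (x %/ 5)%Z * 5 + (r%:Z ^+ 4 - 1).
  by ring.
rewrite rpredD ?dvdz_mull //.
by move: r_gt0 r_lt5; case: r => [|[|[|[|[|]]]]].
Qed.

Definition twist (a : nat) (h : {poly int}) : {poly int} :=
  (\sum_(l < a) 'X^l) ^+ 3 * (h \Po 'X^a).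

Lemma comp_Xn_cube (h : {poly int}) (a : nat) :
  (1 + ('X - 1) ^+ 3 * h) \Po 'X^a = 1 + ('X - 1) ^+ 3 * twist a h.
Proof. by rewrite rmorphD rmorph1 rmorphM rmorphXn rmorphB rmorph1 /= comp_polyX subrX1 /twist; ring. Qed.

Lemma twist_horner1 (a : nat) (h : {poly int}) : (twist a h).[1] = a%:Z ^+ 3 * h.[1].
Proof.
rewrite /twist hornerM horner_exp horner_comp hornerXn expr1n horner_sum.
under eq_bigr do rewrite hornerXn expr1n.
by rewrite sumr_const card_ord natz.
Qed.

Definition lift_poly (i j : nat) (D W : {poly int}) (c : int) : {poly int} :=
  (1 - 'X) + 'Phi_(5 ^ j) * (c%:P * 'Phi_(5 ^ i) - D * W).

Section Lift.

Variables (i j : nat) (C D h : {poly int}) (a : nat) (c : int).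
Hypotheses (i_gt0 : (0 < i)%N) (j_gt0 : (0 < j)%N).
Hypothesis bezout : (1 - 'X) ^+ 4 = 'Phi_(5 ^ i) * C + 'Phi_(5 ^ j) * D.

Local Notation G := (1 + ('X - 1) ^+ 3 * h).
Local Notation F := (lift_poly i j D (twist a h) c).

Lemma lift_poly_modPhi_i :
  F = (1 - 'X) * (G \Po 'X^a) + 'Phi_(5 ^ i) * (c%:P * 'Phi_(5 ^ j) + C * twist a h).
Proof.
rewrite comp_Xn_cube /lift_poly; set W := twist a h; apply/eqP; rewrite -subr_eq0; apply/eqP.
transitivity (((1 - 'X) ^+ 4 - ('Phi_(5 ^ i) * C + 'Phi_(5 ^ j) * D)) * W); first by ring.
by rewrite -bezout subrr mul0r.
Qed.

Lemma Nk_lift_poly_j : Nk j F = 5.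
Proof. by rewrite /lift_poly Nk_addr_cyclotomicM // Nk_1subX. Qed.

Lemma Nk_lift_poly_i : coprime a 5 -> Nk i F = 5 * Nk i G.
Proof.
move=> co_a5; rewrite lift_poly_modPhi_i (Nk_addr_cyclotomicM i_gt0) NkM.
by rewrite (Nk_1subX i_gt0) (Nk_comp_Xn i_gt0 _ co_a5).
Qed.

Lemma lift_poly_horner1 : F.[1] = 5 * (5 * c - D.[1] * a%:Z ^+ 3 * h.[1]).
Proof.
rewrite /lift_poly; have := twist_horner1 a h; move: (twist a h) => W W1.
have X1 : (1 - 'X : {poly int}).[1] = 0 by rewrite !hornerE subrr.
rewrite hornerD X1 hornerM hornerD hornerN !hornerM hornerC W1.
by rewrite !cyclotomic_5pow_horner1 //; ring.
Qed.

End Lift.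

Lemma exists_lift_poly (i j : nat) (C D h : {poly int}) (m : int) :
  (0 < i)%N -> (0 < j)%N -> (i + j = 3)%N ->
  (1 - 'X) ^+ 4 = 'Phi_(5 ^ i) * C + 'Phi_(5 ^ j) * D ->
  ~~ (5 %| D.[1] * h.[1])%Z -> m%:~R = Nk i (1 + ('X - 1) ^+ 3 * h) ->
  exists F : {poly int},
    [/\ M25 F = (5 ^+ 3 * m)%:~R, F.[1] = 5, Nk j F = 5 & Nk i F = (5 * m)%:~R].
Proof.
move=> i_gt0 j_gt0 ij3 bezout Dh_ndvd5 mE.
have /exists_cube_inverse_mod5[a co_a5 /dvdzP[c cE]] : ~~ (5 %| - (D.[1] * h.[1]))%Z.
  by rewrite rpredN.
pose F := lift_poly i j D (twist a h) (- c).
have F1 : F.[1] = 5.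
  by rewrite lift_poly_horner1 // -[RHS]mulr1; congr (_ * _); move: cE; lia.
have NjF : Nk j F = 5 by apply: Nk_lift_poly_j.
have NiF : Nk i F = (5 * m)%:~R by rewrite (Nk_lift_poly_i _ _ i_gt0 bezout co_a5) -mE rmorphM.
exists F; split => //.
rewrite M25_Nk F1; move: NiF NjF.
have [[-> ->]|[-> ->]] : (i = 1 /\ j = 2 \/ i = 2 /\ j = 1)%N by lia.
all: by move=> -> ->; ring.
Qed.

Theorem lemma3p4 (m : int) :
  ((exists h : {poly int}, ~~ (5 %| h.[1])%Z /\
       m%:~R = Nk 1 (1 + ('X - 1) ^+ 3 * h)) ->
   exists F : {poly int},
     [/\ M25 F = (5 ^+ 3 * m)%:~R, F.[1] = 5, Nk 2 F = 5 & Nk 1 F = (5 * m)%:~R])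
  /\
  ((exists h : {poly int}, ~~ (5 %| h.[1])%Z /\
       m%:~R = Nk 2 (1 + ('X - 1) ^+ 3 * h)) ->
   exists F : {poly int},
     [/\ M25 F = (5 ^+ 3 * m)%:~R, F.[1] = 5, Nk 1 F = 5 & Nk 2 F = (5 * m)%:~R]).
Proof.
have bezout_Phi25_horner1 : bezout_Phi25.[1] = -1.
  by rewrite /bezout_Phi25 !hornerE !expr1n; ring.
have bezout_Phi5_horner1 : bezout_Phi5.[1] = 1.
  by rewrite /bezout_Phi5 -polyC1 !(hornerD, hornerN, hornerMn, hornerXn, hornerX, hornerC) !expr1n.
split=> -[h [h_ndvd5 mE]].
- apply: (exists_lift_poly _ _ _ cyclotomic_bezout _ mE) => //.
  by rewrite bezout_Phi25_horner1 mulN1r rpredN.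
- apply: (exists_lift_poly _ _ _ (etrans cyclotomic_bezout (addrC _ _)) _ mE) => //.
  by rewrite bezout_Phi5_horner1 mul1r.
Qed.
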